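(* Let $D,\chi,\varepsilon>0$, $a\ge 0$, $\beta>0$, $b=D\beta^2$. Then there is no $r_0>0$ and no pair of functions $\rho\in C^0[0,\infty)$, $\phi\in C^2[0,\infty)$ with $\rho\ge 0$, $\phi(0)\ge 0$, such that $\rho(0)=0$, $\rho>0$ on $(0,r_0)$, $\rho\equiv0$ on $[r_0,\infty)$, $\rho$ is differentiable on $(0,r_0)$ with $\varepsilon\rho\rho_r=\chi\rho\phi_r$ there, and $D\phi_{rr}+D\frac{\phi_r}{r}+a\rho-b\phi=0$ on $(0,\infty)$. (That is, there is no single whole bump solution touching $r=0$.)
   Context: The system $\partial_r(\frac{\varepsilon}{2}\rho^2)=\chi\rho\phi_r$, $D\phi_{rr}+D\phi_r/r+a\rho-b\phi=0$ is the radially symmetric stationary form of a hyperbolic-parabolic chemotaxis model on $\mathbb{R}^2$ with pressure $p(\rho)=\frac{\varepsilon}{2}\rho^2$; $r=|x|$. *)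

From Stdlib Require Import Reals.
From Coquelicot Require Import Coquelicot.
Open Scope R_scope.

Definition cont_on_nonneg (f : R -> R) : Prop :=
  forall x, 0 <= x ->
    filterlim f (within (fun y => 0 <= y) (locally x)) (locally (f x)).

Definition deriv_on_nonneg (f f1 : R -> R) : Prop :=
  (forall r, 0 < r -> is_derive f r (f1 r)) /\
  filterlim (fun h => (f h - f 0) / h) (at_right 0) (locally (f1 0)).

Definition C2_nonneg (phi phi1 phi2 : R -> R) : Prop :=
  deriv_on_nonneg phi phi1 /\ deriv_on_nonneg phi1 phi2 /\
  cont_on_nonneg phi /\ cont_on_nonneg phi1 /\ cont_on_nonneg phi2.

From Stdlib Require Import Reals Lra.
From Coquelicot Require Import Coquelicot.
Open Scope R_scope.

(* On the support, [rho > 0] turns the flux condition into [rho' = k phi'] with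
   [k = chi / eps], so [rho = k (phi - phi 0)] on [[0, r0]] and [phi r0 = phi 0].
   There the elliptic equation becomes the autonomous radial equation
   [D (phi'' + phi' / r) + f phi = 0] with [f x = a k (x - phi 0) - b x], and
   [phi' 0 = 0] since [phi' r = r (b phi - a rho - D phi'') / D].  For a primitive
   [F] of [f], the energy [D phi'^2 / 2 + F phi] has derivative [- D phi'^2 / r <= 0]
   yet is not smaller at [r0] than at [0]; so it is constant, [phi' = 0] on
   [(0, r0)], hence [rho' = 0] there, contradicting [rho 0 = 0 < rho]. *)

(* Extending [f] by [f 0] to the left turns continuity on [[0, +oo)] into
   two-sided continuity, as the Reals mean value theorem requires. *)
Lemma continuous_clamp (f : R -> R) (x : R) :
  cont_on_nonneg f -> 0 <= x -> continuous (fun y => f (Rmax 0 y)) x.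
Proof.
  intros Hf Hx.
  assert (Hdist : forall y, Rabs (Rmax 0 y - x) <= Rabs (y - x)).
  { intros y. destruct (Rle_dec 0 y).
    - rewrite Rmax_right; lra.
    - rewrite Rmax_left, !Rabs_left1; lra. }
  unfold continuous. rewrite Rmax_right by exact Hx.
  eapply filterlim_comp; [| exact (Hf x Hx)].
  intros P [e He]. exists e. intros y Hy. apply He; [| apply Rmax_l].
  exact (Rle_lt_trans _ _ _ (Hdist y) Hy).
Qed.

Lemma MVT_clamp (f df : R -> R) (a b : R) :
  0 <= a < b ->
  (forall x, a <= x <= b -> continuous (fun y => f (Rmax 0 y)) x) ->
  (forall x, a < x < b -> is_derive f x (df x)) ->
  exists c, a < c < b /\ f b - f a = df c * (b - a).
Proof.
  intros Hab Hc Hd.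
  set (g := fun y => f (Rmax 0 y)).
  assert (Hg : forall x, a < x < b -> is_derive g x (df x)).
  { intros x Hx. apply is_derive_ext_loc with (f := f); [| apply Hd; lra].
    exists (mkposreal x ltac:(lra)). intros y Hy.
    change (Rabs (y - x) < x) in Hy. apply Rabs_def2 in Hy.
    unfold g. rewrite Rmax_right by lra. reflexivity. }
  assert (Hg_pt : forall c, a < c < b -> derivable_pt g c).
  { intros c Hc'. exists (df c). apply is_derive_Reals, Hg, Hc'. }
  destruct (MVT g id a b Hg_pt (fun c _ => derivable_pt_id c)) as [c [Hc_ab Hm]].
  - lra.
  - intros x Hx. apply continuity_pt_filterlim, Hc, Hx.
  - intros x _. apply derivable_continuous_pt, derivable_pt_id.
  - exists c. split; [exact Hc_ab |].
    rewrite derive_pt_id, (derive_pt_eq_0 g c (df c) (Hg_pt c Hc_ab)) in Hm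
      by (apply is_derive_Reals, Hg, Hc_ab).
    unfold g, id in Hm. rewrite !Rmax_right in Hm by lra. lra.
Qed.

Lemma derive_nonpos_le (f df : R -> R) (a b : R) :
  0 <= a < b ->
  (forall x, a <= x <= b -> continuous (fun y => f (Rmax 0 y)) x) ->
  (forall x, a < x < b -> is_derive f x (df x)) ->
  (forall x, a < x < b -> df x <= 0) ->
  f b <= f a.
Proof.
  intros Hab Hc Hd Hneg.
  destruct (MVT_clamp f df a b Hab Hc Hd) as [c [Hc_ab Hm]].
  assert (df c <= 0) by (apply Hneg, Hc_ab). nra.
Qed.

Lemma derive_nonpos_eq0 (f df : R -> R) (a b : R) :
  0 <= a < b ->
  (forall x, a <= x <= b -> continuous (fun y => f (Rmax 0 y)) x) ->
  (forall x, a < x < b -> is_derive f x (df x)) ->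
  (forall x, a < x < b -> df x <= 0) ->
  f a <= f b ->
  forall x, a < x < b -> df x = 0.
Proof.
  intros Hab Hc Hd Hneg Hfab x Hx.
  assert (Hconst : forall y, a < y < b -> f y = f a).
  { intros y Hy.
    assert (f y <= f a) by (apply (derive_nonpos_le f df);
      [lra | intros; apply Hc | intros; apply Hd | intros; apply Hneg]; lra).
    assert (f b <= f y) by (apply (derive_nonpos_le f df);
      [lra | intros; apply Hc | intros; apply Hd | intros; apply Hneg]; lra).
    lra. }
  assert (Hd0 : is_derive f x 0).
  { apply is_derive_ext_loc with (f := fun _ => f a); [| exact (is_derive_const (f a) x)].
    assert (He : 0 < Rmin (x - a) (b - x)) by (apply Rmin_glb_lt; lra).
    exists (mkposreal _ He). intros y Hy.
    change (Rabs (y - x) < Rmin (x - a) (b - x)) in Hy. apply Rabs_def2 in Hy.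
    pose proof (Rmin_l (x - a) (b - x)). pose proof (Rmin_r (x - a) (b - x)).
    symmetry. apply Hconst. lra. }
  rewrite <- (is_derive_unique f x _ (Hd x Hx)). exact (is_derive_unique f x _ Hd0).
Qed.

Lemma is_derive_of_cancel (f : R -> R) (x e c u l : R) :
  e <> 0 -> u <> 0 -> ex_derive f x ->
  e * u * Derive f x = c * u * l -> is_derive f x (c / e * l).
Proof.
  intros He Hu Hex Heq.
  replace (c / e * l) with (Derive f x) by (apply Rmult_eq_reg_l with (e * u);
    [rewrite Heq; field; exact He | apply Rmult_integral_contrapositive; auto]).
  exact (Derive_correct f x Hex).
Qed.

Lemma sub_eq_scale_of_derive (f g dg : R -> R) (k r0 : R) :
  cont_on_nonneg f -> cont_on_nonneg g ->
  (forall r, 0 < r < r0 -> is_derive f r (k * dg r)) ->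
  (forall r, 0 < r < r0 -> is_derive g r (dg r)) ->
  forall r, 0 <= r <= r0 -> f r - f 0 = k * (g r - g 0).
Proof.
  intros Cf Cg Df Dg r Hr.
  destruct (Req_dec r 0) as [-> | Hr0]; [ring |].
  destruct (MVT_clamp (fun y => f y - k * g y) (fun _ => 0) 0 r) as [c [Hc Hm]].
  - lra.
  - intros x Hx.
    apply (continuous_minus (fun y => f (Rmax 0 y)) (fun y => k * g (Rmax 0 y))).
    + apply continuous_clamp; [exact Cf | lra].
    + apply (continuous_scal_r k (fun y => g (Rmax 0 y))), continuous_clamp; [exact Cg | lra].
  - intros x Hx.
    replace 0 with (k * dg x - k * dg x) by ring.
    apply (is_derive_minus f (fun y => k * g y)); [apply Df; lra |].
    apply (is_derive_scal (fun y => g y)), Dg; lra.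
  - lra.
Qed.

Lemma eq0_of_eq_id_mul (f q : R -> R) :
  continuous (fun y => f (Rmax 0 y)) 0 -> continuous q 0 ->
  (forall r, 0 < r -> f r = r * q r) -> f 0 = 0.
Proof.
  intros Cf Cq Hfq.
  assert (Hle : filter_le (at_right 0) (locally 0))
    by (intros P HP; exact (filter_imp _ _ (fun _ H _ => H) HP)).
  assert (Hlim_f : filterlim f (at_right 0) (locally (f 0))).
  { apply (filterlim_ext_loc (fun y => f (Rmax 0 y))).
    - exists (mkposreal 1 Rlt_0_1). intros y _ Hy. rewrite Rmax_right by lra. reflexivity.
    - unfold continuous in Cf. rewrite Rmax_left in Cf by lra.
      exact (filterlim_filter_le_1 _ Hle Cf). }
  assert (Hlim_q : filterlim (fun y => y * q y) (at_right 0) (locally 0)).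
  { apply (filterlim_filter_le_1 _ Hle).
    replace 0 with (0 * q 0) at 2 by ring.
    exact (continuous_mult (fun y => y) q 0 (continuous_id 0) Cq). }
  apply (filterlim_ext_loc _ f) in Hlim_q.
  - exact (filterlim_locally_unique _ _ _ Hlim_f Hlim_q).
  - exists (mkposreal 1 Rlt_0_1). intros y _ Hy. symmetry. apply Hfq, Hy.
Qed.

Lemma radial_derive_eq0_at_0 (D : R) (g phi1 phi2 : R -> R) :
  D <> 0 -> continuous (fun y => g (Rmax 0 y)) 0 ->
  cont_on_nonneg phi1 -> cont_on_nonneg phi2 ->
  (forall r, 0 < r -> D * phi2 r + D * phi1 r / r + g r = 0) ->
  phi1 0 = 0.
Proof.
  intros HD Cg Cphi1 Cphi2 Hode.
  apply (eq0_of_eq_id_mul phi1 (fun y => - (D * phi2 (Rmax 0 y) + g (Rmax 0 y)) / D)).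
  - apply continuous_clamp; [exact Cphi1 | lra].
  - apply (continuous_scal_l (fun y => - (D * phi2 (Rmax 0 y) + g (Rmax 0 y))) (/ D) 0).
    apply (continuous_opp (fun y => D * phi2 (Rmax 0 y) + g (Rmax 0 y))).
    apply (continuous_plus (fun y => D * phi2 (Rmax 0 y)) (fun y => g (Rmax 0 y))); [| exact Cg].
    apply (continuous_scal_r D (fun y => phi2 (Rmax 0 y))), continuous_clamp; [exact Cphi2 | lra].
  - intros r Hr. rewrite Rmax_right by lra.
    replace (- (D * phi2 r + g r)) with (D * phi1 r / r) by (specialize (Hode r Hr); lra).
    field. split; lra.
Qed.

Definition radial_energy (D : R) (F phi phi1 : R -> R) (r : R) : R :=
  D * phi1 r ^ 2 / 2 + F (phi r).

Lemma is_derive_radial_energy (D : R) (f F phi phi1 phi2 : R -> R) (r : R) :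
  r <> 0 -> is_derive F (phi r) (f (phi r)) ->
  is_derive phi r (phi1 r) -> is_derive phi1 r (phi2 r) ->
  D * phi2 r + D * phi1 r / r + f (phi r) = 0 ->
  is_derive (radial_energy D F phi phi1) r (- (D * phi1 r ^ 2 / r)).
Proof.
  intros Hr DF Dphi Dphi1 Hode.
  set (dkin := D * (INR 2 * phi2 r * phi1 r ^ 1)).
  assert (Hkin : is_derive (fun s => D * phi1 s ^ 2 / 2) r (dkin * / 2)).
  { apply (is_derive_scal_l (fun s => D * phi1 s ^ 2) r dkin (/ 2)).
    apply (is_derive_scal (fun s => phi1 s ^ 2)).
    exact (is_derive_pow phi1 2 r (phi2 r) Dphi1). }
  assert (Hpot : is_derive (fun s => F (phi s)) r (phi1 r * f (phi r)))
    by exact (is_derive_comp F phi r (f (phi r)) (phi1 r) DF Dphi).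
  replace (- (D * phi1 r ^ 2 / r)) with (dkin * / 2 + phi1 r * f (phi r)).
  - exact (is_derive_plus _ _ r _ _ Hkin Hpot).
  - replace (f (phi r)) with (- (D * phi2 r + D * phi1 r / r)) by lra.
    unfold dkin. simpl. field. exact Hr.
Qed.

Lemma continuous_clamp_radial_energy (D : R) (f F phi phi1 : R -> R) (x : R) :
  (forall u, is_derive F u (f u)) -> cont_on_nonneg phi -> cont_on_nonneg phi1 ->
  0 <= x -> continuous (fun y => radial_energy D F phi phi1 (Rmax 0 y)) x.
Proof.
  intros DF Cphi Cphi1 Hx.
  assert (Hsmooth : forall (G : R -> R) u, (forall v, ex_derive G v) -> continuous G u)
    by (intros G u HG; exact (ex_derive_continuous G u (HG u))).
  apply (continuous_plus (fun y => D * phi1 (Rmax 0 y) ^ 2 / 2)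
           (fun y => F (phi (Rmax 0 y)))).
  - apply (continuous_comp (fun y => phi1 (Rmax 0 y)) (fun u => D * u ^ 2 / 2)).
    + apply continuous_clamp; assumption.
    + apply Hsmooth. intros v. auto_derive. exact I.
  - apply (continuous_comp (fun y => phi (Rmax 0 y)) F).
    + apply continuous_clamp; assumption.
    + apply Hsmooth. intros v. exists (f v). apply DF.
Qed.

Lemma radial_derive_eq0_of_return (D : R) (f F phi phi1 phi2 : R -> R) (r0 : R) :
  0 < D -> 0 < r0 -> (forall u, is_derive F u (f u)) ->
  cont_on_nonneg phi -> cont_on_nonneg phi1 ->
  (forall r, 0 < r < r0 -> is_derive phi r (phi1 r)) ->
  (forall r, 0 < r < r0 -> is_derive phi1 r (phi2 r)) ->
  (forall r, 0 < r < r0 -> D * phi2 r + D * phi1 r / r + f (phi r) = 0) ->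
  phi1 0 = 0 -> phi r0 = phi 0 ->
  forall r, 0 < r < r0 -> phi1 r = 0.
Proof.
  intros HD Hr0 DF Cphi Cphi1 Dphi Dphi1 Hode Hphi1_0 Hphi_r0 r Hr.
  set (E := radial_energy D F phi phi1).
  assert (HE : E 0 <= E r0).
  { unfold E, radial_energy. rewrite Hphi1_0, Hphi_r0.
    assert (0 <= D * phi1 r0 ^ 2) by (apply Rmult_le_pos; [lra | apply pow2_ge_0]). lra. }
  assert (Hdiss : - (D * phi1 r ^ 2 / r) = 0).
  { apply (derive_nonpos_eq0 E (fun s => - (D * phi1 s ^ 2 / s)) 0 r0);
      [lra | | | | exact HE | exact Hr].
    - intros x Hx. apply (continuous_clamp_radial_energy D f); auto; lra.
    - intros x Hx. apply (is_derive_radial_energy D f F phi phi1 phi2); auto; lra.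
    - intros x Hx. assert (0 <= D * phi1 x ^ 2 / x).
      { apply Rdiv_le_0_compat; [apply Rmult_le_pos; [lra | apply pow2_ge_0] | lra]. }
      lra. }
  assert (Hsq : phi1 r ^ 2 = 0).
  { apply Rmult_eq_reg_l with (D / r); [| apply Rgt_not_eq, Rdiv_lt_0_compat; lra].
    replace (D / r * phi1 r ^ 2) with (D * phi1 r ^ 2 / r) by (field; lra). lra. }
  nra.
Qed.

Theorem mainTheorem3 (D chi eps a beta : R) :
  0 < D -> 0 < chi -> 0 < eps -> 0 <= a -> 0 < beta ->
  let b := D * beta ^ 2 in
  ~ exists (r0 : R) (rho phi phi1 phi2 : R -> R),
      0 < r0 /\
      cont_on_nonneg rho /\
      C2_nonneg phi phi1 phi2 /\
      (forall r, 0 <= r -> 0 <= rho r) /\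
      0 <= phi 0 /\
      rho 0 = 0 /\
      (forall r, 0 < r < r0 -> 0 < rho r) /\
      (forall r, r0 <= r -> rho r = 0) /\
      (forall r, 0 < r < r0 ->
         ex_derive rho r /\ eps * rho r * Derive rho r = chi * rho r * phi1 r) /\
      (forall r, 0 < r ->
         D * phi2 r + D * phi1 r / r + a * rho r - b * phi r = 0).
Proof.
  intros HD Hchi Heps _ _ b
    [r0 [rho [phi [phi1 [phi2 [Hr0 [Crho [[[Dphi _] [[Dphi1 _] [Cphi [Cphi1 Cphi2]]]]
    [_ [_ [Hrho0 [Hrho_pos [Hrho_r0 [Hflux Hode]]]]]]]]]]]]]].
  set (k := chi / eps).
  assert (Drho : forall r, 0 < r < r0 -> is_derive rho r (k * phi1 r)).
  { intros r Hr. destruct (Hflux r Hr) as [Hex Heq].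
    apply (is_derive_of_cancel rho r eps chi (rho r));
      [lra | apply Rgt_not_eq, Hrho_pos, Hr | exact Hex | exact Heq]. }
  assert (Hrho_phi : forall r, 0 <= r <= r0 -> rho r = k * (phi r - phi 0)).
  { intros r Hr. rewrite <- (Rminus_0_r (rho r)), <- Hrho0 at 1.
    apply (sub_eq_scale_of_derive rho phi phi1 k r0); auto with real.
    intros s Hs. apply Dphi. lra. }
  assert (Hphi1_0 : phi1 0 = 0).
  { apply (radial_derive_eq0_at_0 D (fun r => a * rho r - b * phi r) phi1 phi2);
      [lra | | exact Cphi1 | exact Cphi2 | intros r Hr; rewrite <- (Hode r Hr); ring].
    apply (continuous_minus (fun y => a * rho (Rmax 0 y)) (fun y => b * phi (Rmax 0 y))).
    - apply (continuous_scal_r a (fun y => rho (Rmax 0 y))), continuous_clamp; [exact Crho | lra].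
    - apply (continuous_scal_r b (fun y => phi (Rmax 0 y))), continuous_clamp; [exact Cphi | lra]. }
  assert (Hphi_r0 : phi r0 = phi 0).
  { assert (Hk : k <> 0) by (apply Rgt_not_eq, Rdiv_lt_0_compat; lra).
    pose proof (Hrho_phi r0 ltac:(lra)) as H. rewrite Hrho_r0 in H by lra.
    symmetry in H. apply Rmult_integral in H as [H | H]; [contradiction | lra]. }
  assert (Hflat : forall r, 0 < r < r0 -> phi1 r = 0).
  { apply (radial_derive_eq0_of_return D (fun x => a * k * (x - phi 0) - b * x)
      (fun x => (a * k * (x - phi 0) ^ 2 - b * x ^ 2) / 2) phi phi1 phi2 r0); auto.
    - intros x. auto_derive; [exact I | field].
    - intros r Hr. apply Dphi; lra.
    - intros r Hr. apply Dphi1; lra.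
    - intros r Hr. specialize (Hode r ltac:(lra)). rewrite Hrho_phi in Hode by lra. lra. }
  destruct (MVT_clamp rho (fun r => k * phi1 r) 0 (r0 / 2)) as [c [Hc Hm]].
  - lra.
  - intros x Hx. apply continuous_clamp; [exact Crho | lra].
  - intros x Hx. apply Drho. lra.
  - rewrite Hflat, Hrho0 in Hm by lra. pose proof (Hrho_pos (r0 / 2) ltac:(lra)). lra.
Qed.
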